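(* Let $Q$ be a blooming quantale and $\mathcal{F}\in\operatorname{mF}(Q)$. The following are equivalent: (a) $\mathcal{F}$ is normal over $Q$; (b) $\mathcal{F}$ is locally solid; (c) $\mathcal{F}$ is normal over every blooming $Q$-module.
   Context: A quantale is a poset $Q$ with all nonempty joins $\sum$ (no bottom required), top $1$, commutative associative multiplication with unit $1$ distributing over nonempty joins; a $Q$-module is a poset $M$ with all nonempty joins and an associative unital action distributing over nonempty joins in each variable ($Q$ is a module over itself). An m-filter is a subset of $Q$ containing $1$, upward closed and closed under multiplication. Write $x\le^*\sum_{i\in I}x_i$ if $x\le\sum_{i\in I_0}x_i$ for some finite nonempty $I_0\subseteq I$. $\mathcal{N}$ is normal over $M$ if for all $s\in\mathcal{N}$, $m\in M$ and families $(m_i)_{i\in I}$ in $M$ with $sm\le\sum_im_i$, there exist families $(m'_j)_{j\in J}$ in $M$ and $(s_j)_{j\in J}$ in $\mathcal{N}$ with $m\le\sum_jm'_j$ and $s_jm'_j\le^*\sum_im_i$ for all $j$. $\mathcal{F}$ is locally solid if there is a nonempty $W\subseteq Q$ with $\sum W=1$ such that for every $w\in W$ and every nonempty family $(x_i)$ with $\sum_ix_i\in\mathcal{F}$ there is $t\in\mathcal{F}$ with $tw\le^*\sum_ix_i$. Suspension: order nonempty subsets of a complete semilattice $L$ by $S\le T$ iff each $s\in S$ satisfies $s\le^*\sum T$; $\Sigma L$ is the poset of equivalence classes, $\sigma_L(S)=\sum S$; $\Sigma Q$ has product $S\cdot T=\{st\}$ and acts on $\Sigma M$ by $S\cdot A=\{sa\}$.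 A left adjoint of $\sigma_L$ is an order-preserving $\sigma_L^\flat$ with $\sigma_L^\flat(x)\le S\iff x\le\sigma_L(S)$. $Q$ is blooming if $\sigma_Q^\flat$ exists and $\sigma_Q^\flat(ab)=\sigma_Q^\flat(a)\cdot\sigma_Q^\flat(b)$; for blooming $Q$, $M$ is blooming if $\sigma_M^\flat$ exists and $\sigma_M^\flat(qm)=\sigma_Q^\flat(q)\cdot\sigma_M^\flat(m)$. *)

From Stdlib Require Import List.
Import ListNotations.
Set Implicit Arguments.

(* A poset with all nonempty joins.  [sup S] is the join of the subset S;
   it is only constrained when S is nonempty. *)
Record NJPoset := {
  car :> Type;
  le : car -> car -> Prop;
  sup : (car -> Prop) -> car;
  le_refl : forall x, le x x;
  le_trans : forall x y z, le x y -> le y z -> le x z;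
  le_antisym : forall x y, le x y -> le y x -> x = y;
  sup_ub : forall (S : car -> Prop) x, S x -> le x (sup S);
  sup_least : forall (S : car -> Prop) y,
      (exists x, S x) -> (forall x, S x -> le x y) -> le (sup S) y
}.
Arguments le {n} _ _.
Arguments sup {n} _.

Definition famsup (P : NJPoset) (I : Type) (x : I -> P) : P :=
  sup (fun y => exists i, y = x i).
Arguments famsup {P I} x.

Definition lestar (P : NJPoset) (x : P) (I : Type) (f : I -> P) : Prop :=
  exists l : list I, l <> [] /\
    le x (sup (fun y => exists i, In i l /\ y = f i)).
Arguments lestar {P} x {I} f.

Definition image_set (A B : Type) (g : A -> B) (S : A -> Prop) : B -> Prop :=
  fun y => exists x, S x /\ y = g x.

Record Quantale := {
  qpos :> NJPoset;
  qmul : qpos -> qpos -> qpos;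
  qone : qpos;
  qmulA : forall a b c, qmul a (qmul b c) = qmul (qmul a b) c;
  qmulC : forall a b, qmul a b = qmul b a;
  qmul1 : forall a, qmul qone a = a;
  qone_top : forall a, le a qone;
  qmul_sup : forall a (S : qpos -> Prop), (exists x, S x) ->
      qmul a (sup S) = sup (image_set (qmul a) S)
}.
Arguments qmul {q} _ _.
Arguments qone {q}.

Record QModule (Q : Quantale) := {
  mpos :> NJPoset;
  act : Q -> mpos -> mpos;
  actA : forall (a b : Q) m, act (qmul a b) m = act a (act b m);
  act1 : forall m, act qone m = m;
  act_supl : forall (S : Q -> Prop) m, (exists x, S x) ->
      act (sup S) m = sup (image_set (fun s => act s m) S);
  act_supr : forall (q : Q) (T : mpos -> Prop), (exists x, T x) ->
      act q (sup T) = sup (image_set (act q) T)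
}.
Arguments act {Q q0} _ _.

Definition mfilter (Q : Quantale) (F : Q -> Prop) : Prop :=
  F qone /\ (forall x y : Q, F x -> le x y -> F y) /\
  (forall x y : Q, F x -> F y -> F (qmul x y)).

(* N normal over a Q-"module" M with action [a]; stated for a general
   action so that it applies to Q acting on itself by multiplication. *)
Definition normal_over (Q : Quantale) (M : NJPoset) (a : Q -> M -> M)
  (N : Q -> Prop) : Prop :=
  forall (s : Q) (m : M) (I : Type) (mi : I -> M),
    N s -> inhabited I -> le (a s m) (famsup mi) ->
    exists (J : Type) (m' : J -> M) (sj : J -> Q),
      inhabited J /\ (forall j, N (sj j)) /\ le m (famsup m') /\
      (forall j, lestar (a (sj j) (m' j)) mi).

Definition locally_solid (Q : Quantale) (F : Q -> Prop) : Prop :=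
  exists W : Q -> Prop, (exists w, W w) /\ sup W = qone /\
    forall w, W w -> forall (I : Type) (x : I -> Q),
      inhabited I -> F (famsup x) ->
      exists t, F t /\ lestar (qmul t w) x.

(* Suspension: preorder on nonempty subsets; Sigma L is its quotient. *)
Definition sle (L : NJPoset) (S T : L -> Prop) : Prop :=
  forall s, S s -> exists l : list L, l <> [] /\ (forall y, In y l -> T y) /\
     le s (sup (fun y => In y l)).

Arguments sle {L} S T.
Definition sequiv (L : NJPoset) (S T : L -> Prop) : Prop := sle S T /\ sle T S.
Arguments sequiv {L} S T.

(* f : L -> Sigma L (represented by a choice of nonempty representatives)
   is a left adjoint of sigma_L = sup. *)
Definition sigma_ladj (L : NJPoset) (f : L -> (L -> Prop)) : Prop :=
  (forall x, exists y, f x y) /\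
  (forall x y, le x y -> sle (f x) (f y)) /\
  (forall x (S : L -> Prop), (exists s, S s) -> (sle (f x) S <-> le x (sup S))).
Arguments sigma_ladj {L} f.

Definition setmul (Q : Quantale) (S T : Q -> Prop) : Q -> Prop :=
  fun z => exists s t, S s /\ T t /\ z = qmul s t.
Arguments setmul {Q} S T.

Definition setact (Q : Quantale) (M : QModule Q) (S : Q -> Prop) (A : M -> Prop)
  : M -> Prop := fun z => exists s a, S s /\ A a /\ z = act s a.
Arguments setact {Q M} S A.

Definition blooming (Q : Quantale) : Prop :=
  exists f : Q -> (Q -> Prop), sigma_ladj f /\
    forall a b : Q, sequiv (f (qmul a b)) (setmul (f a) (f b)).

(* For blooming Q: sigma_Q^flat is unique up to equivalence in Sigma Q,
   so we quantify existentially over it. *)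
Definition module_blooming (Q : Quantale) (M : QModule Q) : Prop :=
  exists (fQ : Q -> (Q -> Prop)) (fM : M -> (M -> Prop)),
    sigma_ladj fQ /\ sigma_ladj fM /\
    forall (q : Q) (m : M), sequiv (fM (act q m)) (setact (fQ q) (fM m)).

Arguments mfilter {Q} F.
Arguments normal_over {Q M} a N.
Arguments locally_solid {Q} F.
Arguments module_blooming {Q} M.

(* (b) => (c): let [s] in [F] with [s m <= sum m_i].  The set
   [sigma^flat(s)] has join above [s], hence in [F], so local solidity gives,
   for [w] in [W], some [t] in [F] with [t w] finitely below it; blooming of
   [M] puts [s' n] (for [s'] in [sigma^flat(s)] and [n] in [sigma^flat(m)])
   finitely below [s m], hence [t w n] finitely below the [m_i].  As
   [m = 1 m = sum W m <= sum_{w, n} w n], the family [(w n)] witnesses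
   normality.  (c) => (a) is the case [M = Q].  (a) => (b): take
   [W = sigma^flat(1)]; normality applied to [1 (sum x_i) <= sum x_i] covers
   each [w] by finitely many [m'_j], and the product of the finitely many
   multipliers [s_j] is the required [t]. *)
From Stdlib Require Import List FunctionalExtensionality PropExtensionality.
Import ListNotations.
Set Implicit Arguments.
Unset Strict Implicit.

Section FinitelyBelow.

Context {P : NJPoset}.

Definition fin_below (x : P) (B : P -> Prop) : Prop :=
  exists l : list P, l <> [] /\ (forall y, In y l -> B y) /\
    le x (sup (fun y => In y l)).

Definition range (I : Type) (f : I -> P) : P -> Prop := fun y => exists i, y = f i.

Lemma sup_le_sup (A B : P -> Prop) :
  (exists x, A x) -> (forall x, A x -> exists y, B y /\ le x y) ->
  le (sup A) (sup B).
Proof.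
  intros hA h. apply sup_least; auto. intros x Ax.
  destruct (h x Ax) as [y [By lxy]].
  eapply le_trans; [exact lxy | apply sup_ub; exact By].
Qed.

Lemma sup_In_incl (l1 l2 : list P) :
  l1 <> [] -> incl l1 l2 -> le (sup (fun y => In y l1)) (sup (fun y => In y l2)).
Proof.
  intros n1 h. apply sup_le_sup.
  - destruct l1 as [|a l1]; [congruence|]. exists a; simpl; auto.
  - intros x hx. exists x; split; [apply h, hx | apply le_refl].
Qed.

Lemma sup_pair (a b : P) : le a b -> b = sup (fun y => y = a \/ y = b).
Proof.
  intros h. apply le_antisym.
  - apply sup_ub; auto.
  - apply sup_least; [exists b; auto|]. intros y [-> | ->]; auto. apply le_refl.
Qed.

Lemma fin_below_le (x x' : P) B : le x x' -> fin_below x' B -> fin_below x B.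
Proof. intros h [l [nl [Bl hl]]]. exists l; repeat split; eauto using le_trans. Qed.

Lemma fin_below_list (C : P -> Prop) (l : list P) :
  (forall y, In y l -> fin_below y C) ->
  exists L, (forall z, In z L -> C z) /\
    (forall y, In y l -> le y (sup (fun z => In z L))) /\ (l <> [] -> L <> []).
Proof.
  induction l as [|b l IH]; intros h.
  - exists []; simpl; tauto.
  - destruct (h b (or_introl eq_refl)) as [Lb [nb [Cb lb]]].
    destruct IH as [L [CL [lL nL]]]; [intros y hy; apply h; right; exact hy|].
    exists (Lb ++ L). repeat split.
    + intros z hz. apply in_app_or in hz. destruct hz; auto.
    + intros y [<- | hy].
      * eapply le_trans; [exact lb|]. apply sup_In_incl; auto. apply incl_appl, incl_refl.
      * eapply le_trans; [exact (lL y hy)|]. apply sup_In_incl.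
        -- apply nL. destruct l; [destruct hy | discriminate].
        -- apply incl_appr, incl_refl.
    + destruct Lb; [congruence | discriminate].
Qed.

Lemma fin_below_trans (x : P) (B C : P -> Prop) :
  fin_below x B -> (forall y, B y -> fin_below y C) -> fin_below x C.
Proof.
  intros [l [nl [Bl hx]]] h.
  destruct (@fin_below_list C l) as [L [CL [lL nL]]]; [intros y hy; apply h, Bl, hy|].
  exists L; repeat split; auto.
  eapply le_trans; [exact hx|]. apply sup_least; [|exact lL].
  destruct l as [|a l]; [congruence|]. exists a; simpl; auto.
Qed.

Lemma fin_below_sup_image (A : Type) (g : A -> P) (S : A -> Prop) (L : list A) C :
  L <> [] -> (forall a, In a L -> S a) -> (forall a, S a -> fin_below (g a) C) ->
  fin_below (sup (image_set g (fun a => In a L))) C.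
Proof.
  intros nL SL h. apply fin_below_trans with (B := fun y => In y (map g L)).
  - exists (map g L). repeat split; auto.
    + destruct L; [congruence | discriminate].
    + apply sup_le_sup.
      * destruct L as [|a L]; [congruence|]. exists (g a), a; simpl; auto.
      * intros y [a [ha ->]]. exists (g a); split; [apply in_map; auto | apply le_refl].
  - intros y hy. apply in_map_iff in hy. destruct hy as [a [<- ha]]. apply h, SL, ha.
Qed.

Lemma index_list (I : Type) (f : I -> P) (L : list P) :
  (forall y, In y L -> range f y) ->
  exists l : list I, forall y, In y L <-> exists i, In i l /\ y = f i.
Proof.
  induction L as [|b L IH]; intros h.
  - exists []. intros y; simpl; split; [tauto | intros [i [[] _]]].
  - destruct (h b (or_introl eq_refl)) as [j ->].
    destruct IH as [l hl]; [intros y hy; apply h; right; auto|].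
    exists (j :: l). intros y; simpl; split.
    + intros [<- | hy]; [exists j; auto|].
      apply hl in hy. destruct hy as [i [? ?]]; exists i; auto.
    + intros [i [[<- | hi] ->]]; [auto|]. right; apply hl; exists i; auto.
Qed.

Lemma lestar_fin_below (x : P) (I : Type) (f : I -> P) :
  lestar x f <-> fin_below x (range f).
Proof.
  split.
  - intros [l [nl h]]. exists (map f l). repeat split.
    + destruct l; [congruence | discriminate].
    + intros y hy. apply in_map_iff in hy. destruct hy as [i [<- _]]. exists i; auto.
    + eapply le_trans; [exact h|]. apply sup_le_sup.
      * destruct l as [|i l]; [congruence|]. exists (f i), i; simpl; auto.
      * intros y [i [hi ->]]. exists (f i); split; [apply in_map; auto | apply le_refl].
  - intros [L [nL [hL hx]]]. destruct (index_list hL) as [l hl].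
    exists l. split.
    + intros ->. destruct L as [|a L]; [congruence|].
      destruct (proj1 (hl a) (or_introl eq_refl)) as [i [[] _]].
    + eapply le_trans; [exact hx|]. apply sup_le_sup.
      * destruct L as [|a L]; [congruence|]. exists a; simpl; auto.
      * intros y hy. exists y; split; [apply hl; auto | apply le_refl].
Qed.

Lemma ladj_fin_below (f : P -> (P -> Prop)) x S y :
  sigma_ladj f -> (exists s, S s) -> le x (sup S) -> f x y -> fin_below y S.
Proof. intros [_ [_ h]] hS hx hy. exact (proj2 (h x S hS) hx y hy). Qed.

Lemma le_sup_ladj (f : P -> (P -> Prop)) : sigma_ladj f -> forall x, le x (sup (f x)).
Proof.
  intros [hn [_ h]] x. apply (h x (f x) (hn x)).
  intros s hs. exists [s]. repeat split; [discriminate | intros y [<- | []]; auto |].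
  apply sup_ub; simpl; auto.
Qed.

End FinitelyBelow.


Section Monotonicity.

Context {Q : Quantale}.

Lemma act_le_l (M : QModule Q) (a b : Q) (m : M) : le a b -> le (act a m) (act b m).
Proof.
  intros h. rewrite (sup_pair h), act_supl by (exists a; auto).
  apply sup_ub. exists a; auto.
Qed.

Lemma act_le_r (M : QModule Q) (q : Q) (m n : M) : le m n -> le (act q m) (act q n).
Proof.
  intros h. rewrite (sup_pair h), act_supr by (exists m; auto).
  apply sup_ub. exists m; auto.
Qed.

Lemma qmul_le_r (q a b : Q) : le a b -> le (qmul q a) (qmul q b).
Proof.
  intros h. rewrite (sup_pair h), qmul_sup by (exists a; auto).
  apply sup_ub. exists a; auto.
Qed.

Lemma qmul_le_l (q a b : Q) : le a b -> le (qmul a q) (qmul b q).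
Proof. intros h. rewrite (qmulC _ a), (qmulC _ b). apply qmul_le_r, h. Qed.

Lemma qmul1r (a : Q) : qmul a qone = a.
Proof. rewrite qmulC. apply qmul1. Qed.

Lemma qmul_le_drop_l (a b : Q) : le (qmul a b) b.
Proof.
  eapply le_trans; [apply qmul_le_l, (qone_top _ a)|]. rewrite qmul1. apply le_refl.
Qed.

End Monotonicity.

(* Multiplying by more elements of [F] only shrinks, so one product serves a
   whole finite list. *)
Lemma mfilter_common_multiplier (Q : Quantale) (F : Q -> Prop) (B : Q -> Prop)
  (L : list Q) :
  mfilter F -> (forall y, In y L -> exists s, F s /\ fin_below (qmul s y) B) ->
  exists t, F t /\ forall y, In y L -> fin_below (qmul t y) B.
Proof.
  intros [F1 [_ Fmul]]. induction L as [|y L IH]; intros h.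
  - exists qone; split; [exact F1 | intros y []].
  - destruct (h y (or_introl eq_refl)) as [s [Fs hs]].
    destruct IH as [t [Ft ht]]; [intros z hz; apply h; right; auto|].
    exists (qmul s t). split; [apply Fmul; auto|].
    intros z [<- | hz].
    + apply fin_below_le with (qmul s y); [|exact hs].
      apply qmul_le_l. rewrite qmulC. apply qmul_le_drop_l.
    + apply fin_below_le with (qmul t z); [|apply ht, hz].
      apply qmul_le_l, qmul_le_drop_l.
Qed.

Lemma locally_solid_of_normal_over (Q : Quantale) (F : Q -> Prop) :
  mfilter F -> blooming Q -> normal_over (@qmul Q) F -> locally_solid F.
Proof.
  intros hF [f [Hf _]] HN. exists (f qone). split; [apply (proj1 Hf)|split].
  - apply le_antisym; [apply qone_top | apply (le_sup_ladj Hf)].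
  - intros w hw I x inhI Fx.
    destruct (HN (famsup x) qone I x Fx inhI) as [J [m' [sj [inhJ [HFj [Hm Hj]]]]]].
    { rewrite qmul1r. apply le_refl. }
    destruct (@ladj_fin_below _ f qone (range m') w Hf) as [L [nL [hL hwL]]]; auto.
    { destruct inhJ as [j]; exists (m' j), j; reflexivity. }
    destruct (@mfilter_common_multiplier Q F (range x) L hF) as [t [Ft ht]].
    { intros y hy. destruct (hL y hy) as [j ->].
      exists (sj j); split; [apply HFj | apply lestar_fin_below, Hj]. }
    exists t; split; auto. apply lestar_fin_below.
    apply fin_below_le with (qmul t (sup (fun y => In y L))); [apply qmul_le_r, hwL|].
    rewrite qmul_sup by (destruct L; [congruence|]; eexists; simpl; eauto).
    apply fin_below_sup_image with (S := fun y => In y L); auto.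
Qed.

Section LocallySolidNormal.

Context {Q : Quantale} {F : Q -> Prop} {M : QModule Q}.
Context {W : Q -> Prop} {fQ : Q -> (Q -> Prop)} {fM : M -> (M -> Prop)}.
Hypothesis F_up : forall x y : Q, F x -> le x y -> F y.
Hypothesis W_solid : forall w, W w -> forall (I : Type) (x : I -> Q),
  inhabited I -> F (famsup x) -> exists t, F t /\ lestar (qmul t w) x.
Hypotheses (HfQ : sigma_ladj fQ) (HfM : sigma_ladj fM).
Hypothesis fM_act : forall (q : Q) (m : M), sequiv (fM (act q m)) (setact (fQ q) (fM m)).

Lemma locally_solid_multiplier (s : Q) (m : M) (I : Type) (mi : I -> M) w n :
  F s -> inhabited I -> le (act s m) (famsup mi) -> W w -> fM m n ->
  exists t, F t /\ lestar (act t (act w n)) mi.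
Proof.
  intros Fs inhI Hle hw hn.
  set (x := fun i : {q : Q | fQ s q} => proj1_sig i).
  assert (inhX : inhabited {q : Q | fQ s q}).
  { destruct (proj1 HfQ s) as [q hq]. exact (inhabits (exist _ q hq)). }
  assert (FX : F (famsup x)).
  { apply F_up with s; auto. eapply le_trans; [apply (le_sup_ladj HfQ)|].
    apply sup_least; [apply (proj1 HfQ)|]. intros y hy. apply sup_ub.
    exists (exist _ y hy). reflexivity. }
  destruct (W_solid hw inhX FX) as [t [Ft ht]].
  exists t; split; auto.
  apply lestar_fin_below. rewrite <- actA.
  apply lestar_fin_below in ht. destruct ht as [Lq [nLq [hLq hle]]].
  apply fin_below_le with (act (sup (fun y => In y Lq)) n); [apply act_le_l, hle|].
  rewrite act_supl by (destruct Lq; [congruence|]; eexists; simpl; eauto).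
  apply fin_below_sup_image with (S := fQ s); auto.
  - intros a ha. destruct (hLq a ha) as [[q hq] ->]. exact hq.
  - intros q hq. apply fin_below_trans with (B := fM (act s m)).
    + apply (proj2 (fM_act s m)). exists q, n. auto.
    + intros y hy. apply (@ladj_fin_below _ fM (act s m) (range mi) y HfM); auto.
      destruct inhI as [i]; exists (mi i), i; reflexivity.
Qed.

Lemma le_sup_act_cover :
  (exists w, W w) -> sup W = qone -> forall m : M,
  le m (sup (fun z => exists w n, W w /\ fM m n /\ z = act w n)).
Proof.
  intros Wne supW m.
  rewrite <- (act1 _ m) at 1. rewrite <- supW, act_supl by exact Wne.
  apply sup_least; [destruct Wne as [w hw]; exists (act w m), w; auto|].
  intros y [w [hw ->]]. eapply le_trans; [apply act_le_r, (le_sup_ladj HfM)|].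
  rewrite act_supr by apply (proj1 HfM). apply sup_least.
  - destruct (proj1 HfM m) as [n hn]. exists (act w n), n; auto.
  - intros z [n [hn ->]]. apply sup_ub. exists w, n; auto.
Qed.

End LocallySolidNormal.

Lemma normal_over_of_locally_solid (Q : Quantale) (F : Q -> Prop) (M : QModule Q) :
  mfilter F -> locally_solid F -> module_blooming M -> normal_over (@act Q M) F.
Proof.
  intros [_ [F_up _]] [W [Wne [supW HW]]] [fQ [fM [HfQ [HfM Hact]]]].
  intros s m I mi Fs inhI Hle.
  set (J := {p : Q * Q * M | F (fst (fst p)) /\ W (snd (fst p)) /\ fM m (snd p) /\
              lestar (act (fst (fst p)) (act (snd (fst p)) (snd p))) mi}).
  assert (cover : forall w n, W w -> fM m n -> exists j : J,
             act (snd (fst (proj1_sig j))) (snd (proj1_sig j)) = act w n).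
  { intros w n hw hn.
    destruct (locally_solid_multiplier F_up HW HfQ HfM Hact Fs inhI Hle hw hn)
      as [t [Ft ht]].
    exists (exist _ (t, w, n) (conj Ft (conj hw (conj hn ht)))). reflexivity. }
  exists J, (fun j => act (snd (fst (proj1_sig j))) (snd (proj1_sig j))),
    (fun j => fst (fst (proj1_sig j))).
  split; [|split; [|split]].
  - destruct Wne as [w hw], (proj1 HfM m) as [n hn].
    destruct (cover w n hw hn) as [j _]. exact (inhabits j).
  - intros [[[t w] n] h]; simpl; tauto.
  - eapply le_trans; [exact (le_sup_act_cover HfM Wne supW m)|].
    apply sup_le_sup.
    + destruct Wne as [w hw], (proj1 HfM m) as [n hn]. exists (act w n), w, n; auto.
    + intros z [w [n [hw [hn ->]]]]. destruct (cover w n hw hn) as [j hj].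
      exists (act w n); split; [exists j; auto | apply le_refl].
  - intros [[[t w] n] h]; simpl; tauto.
Qed.

Definition regular_module (Q : Quantale) : QModule Q.
Proof.
  refine (@Build_QModule Q (qpos Q) (@qmul Q) _ _ _ _).
  - intros; symmetry; apply qmulA.
  - apply qmul1.
  - intros S m hS. rewrite qmulC, qmul_sup by auto. f_equal.
    apply functional_extensionality; intro y; apply propositional_extensionality.
    unfold image_set; split; intros [z [hz ->]]; exists z; split; auto; apply qmulC.
  - intros; apply qmul_sup; auto.
Defined.

Lemma regular_module_blooming (Q : Quantale) :
  blooming Q -> module_blooming (regular_module Q).
Proof. intros [f [Hf Hm]]. exists f, f. auto. Qed.

Theorem mainTheorem12 (Q : Quantale) (F : Q -> Prop) :
  blooming Q -> mfilter F ->
  (normal_over (@qmul Q) F <-> locally_solid F) /\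
  (locally_solid F <->
     forall M : QModule Q, module_blooming M -> normal_over (@act Q M) F).
Proof.
  intros hQ hF. split; split.
  - exact (locally_solid_of_normal_over hF hQ).
  - intros hl. exact (normal_over_of_locally_solid hF hl (regular_module_blooming hQ)).
  - intros hl M hM. exact (normal_over_of_locally_solid hF hl hM).
  - intros H. apply (locally_solid_of_normal_over hF hQ).
    exact (H (regular_module Q) (regular_module_blooming hQ)).
Qed.
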